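(* Let $H$ be a real Hilbert space, $C\subseteq H$ a nonempty closed convex set with metric projection $P_C$, and $F\colon H\to H$ a mapping that is monotone ($\langle F(x)-F(y),x-y\rangle\ge 0$ for all $x,y\in H$) and Lipschitz continuous with constant $L>0$. Let $S$ be the (assumed nonempty) set of solutions of the variational inequality: find $x^*\in C$ with $\langle F(x^* ),x-x^*\rangle\ge 0$ for all $x\in C$. Choose $x_0=y_0\in H$ and $\lambda\in\bigl(0,\frac{\sqrt2-1}{L}\bigr)$, and define for $n\ge 0$ $$x_{n+1}=P_C(x_n-\lambda F(y_n)),\qquad y_{n+1}=2x_{n+1}-x_n.$$ Let $z\in S$. Then for every $n\ge 2$, $$\|x_{n+1}-z\|^2\le \|x_n-z\|^2-(1-\lambda L(1+\sqrt2))\|x_n-x_{n-1}\|^2+\lambda L\|x_n-y_{n-1}\|^2-(1-\sqrt2\lambda L)\|x_{n+1}-y_n\|^2-2\lambda\langle F(z),y_n-z\rangle.$$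
   Context: $P_C(x)$ denotes the unique nearest point of $C$ to $x$. *)

From HB Require Import structures.
From mathcomp Require Import all_boot all_order all_algebra.
From mathcomp Require Import boolp classical_sets reals.
Set Implicit Arguments. Unset Strict Implicit. Unset Printing Implicit Defensive.
Import Order.TTheory GRing.Theory Num.Theory.
Local Open Scope ring_scope.
Local Open Scope classical_set_scope.

Section Hilbert.
Variables (R : realType) (V : lmodType R) (ip : V -> V -> R).

Definition ipnorm (x : V) : R := Num.sqrt (ip x x).

Definition is_inner_product : Prop :=
  [/\ (forall x y, ip x y = ip y x),
      (forall a x y z, ip (a *: x + y) z = a * ip x z + ip y z),
      (forall x, 0 <= ip x x) &
      (forall x, ip x x = 0 -> x = 0)].

Definition ip_cvg (u : nat -> V) (l : V) : Prop :=
  forall eps : R, 0 < eps -> exists N, forall n, (N <= n)%N -> ipnorm (u n - l) < eps.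

Definition ip_cauchy (u : nat -> V) : Prop :=
  forall eps : R, 0 < eps -> exists N, forall m n, (N <= m)%N -> (N <= n)%N ->
    ipnorm (u m - u n) < eps.

Definition is_hilbert : Prop :=
  is_inner_product /\ forall u, ip_cauchy u -> exists l, ip_cvg u l.

Definition closed_set (C : set V) : Prop :=
  forall u l, (forall n, C (u n)) -> ip_cvg u l -> C l.

Definition convex_set (C : set V) : Prop :=
  forall x y (t : R), C x -> C y -> 0 <= t <= 1 -> C (t *: x + (1 - t) *: y).

Definition is_metric_proj (C : set V) (P : V -> V) : Prop :=
  forall x, C (P x) /\ forall c, C c -> ipnorm (x - P x) <= ipnorm (x - c).

Definition monotone_op (F : V -> V) : Prop :=
  forall x y, 0 <= ip (F x - F y) (x - y).

Definition lipschitz_op (F : V -> V) (L : R) : Prop :=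
  forall x y, ipnorm (F x - F y) <= L * ipnorm (x - y).

Definition VI_sol (C : set V) (F : V -> V) : set V :=
  [set xs | C xs /\ forall x, C x -> 0 <= ip (F xs) (x - xs)].

End Hilbert.

(** Projecting onto [C] at the step producing [x_{n+1}] (tested against [z])
    and at the step producing [x_n] (tested against [x_{n+1}] and [x_{n-1}]),
    together with monotonicity of [F] between [y_n] and [z], gives after
    expansion
    [|x_{n+1} - z|^2 <= |x_n - z|^2 - |x_n - x_{n-1}|^2 - |x_{n+1} - y_n|^2
       - 2 lambda <F z, y_n - z> + 2 lambda <F y_n - F y_{n-1}, y_n - x_{n+1}>].
    The last term is controlled by Lipschitz continuity, since
    [y_n - y_{n-1} = (x_n - x_{n-1}) + (x_n - y_{n-1})], and two weighted Young
    inequalities with the mutually inverse weights [sqrt 2 + 1] and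
    [sqrt 2 - 1]. *)

From HB Require Import structures.
From mathcomp Require Import all_boot all_order all_algebra.
From mathcomp Require Import boolp classical_sets reals.
From mathcomp Require Import ring lra.
Import Order.TTheory GRing.Theory Num.Theory.
Local Open Scope ring_scope.
Local Open Scope classical_set_scope.

Section InnerProduct.
Context {R : realType} {V : lmodType R} {ip : V -> V -> R}.
Hypothesis ip_inner : is_inner_product ip.

Lemma ipC u v : ip u v = ip v u.
Proof. by case: ip_inner. Qed.

Lemma ip_ge0 u : 0 <= ip u u.
Proof. by case: ip_inner. Qed.

Lemma ipDl u v w : ip (u + v) w = ip u w + ip v w.
Proof. by case: ip_inner => _ ipl _ _; rewrite -[u]scale1r ipl mul1r scale1r. Qed.

Lemma ip0l w : ip 0 w = 0.
Proof. by apply: (@addrI _ (ip 0 w)); rewrite -ipDl !addr0. Qed.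

Lemma ipZl a u w : ip (a *: u) w = a * ip u w.
Proof.
by case: ip_inner => _ ipl _ _; have := ipl a u 0 w; rewrite !addr0 ip0l addr0.
Qed.

Lemma ipNl u w : ip (- u) w = - ip u w.
Proof. by rewrite -scaleN1r ipZl mulN1r. Qed.

Lemma ipDr u v w : ip w (u + v) = ip w u + ip w v.
Proof. by rewrite ipC ipDl !(ipC w). Qed.

Lemma ipZr a u w : ip w (a *: u) = a * ip w u.
Proof. by rewrite ipC ipZl (ipC w). Qed.

Lemma ipNr u w : ip w (- u) = - ip w u.
Proof. by rewrite ipC ipNl (ipC w). Qed.

Definition ipE := (ipDl, ipDr, ipZl, ipZr, ipNl, ipNr).

Ltac ip_symmetries :=
  repeat match goal with
  | |- context [ip ?u ?v] =>
      lazymatch goal with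
      | _ : ip u v = ip v u |- _ => fail
      | _ : ip v u = ip u v |- _ => fail
      | _ => have := ipC u v; move=> ?
      end
  end.

Lemma ipnorm_sqr u : ipnorm ip u ^+ 2 = ip u u.
Proof. by rewrite sqr_sqrtr // ip_ge0. Qed.

Lemma ip_subC u v : ip (u - v) (u - v) = ip (v - u) (v - u).
Proof. by rewrite -opprB ipNl ipNr opprK. Qed.

Lemma ip_sqrBZ a u w :
  ip (u - a *: w) (u - a *: w) = ip u u - 2 * a * ip u w + a ^+ 2 * ip w w.
Proof. by rewrite !ipE (ipC w u); ring. Qed.

Lemma ip_young a u w : 2 * a * ip u w <= ip u u + a ^+ 2 * ip w w.
Proof. by have := ip_ge0 (u - a *: w); rewrite ip_sqrBZ; lra. Qed.

Lemma metric_proj_ip_le0 {C : set V} {P : V -> V} : convex_set C -> is_metric_proj ip C P ->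
  forall v c, C c -> ip (v - P v) (c - P v) <= 0.
Proof.
move=> Ccvx HP v c Cc; have [CP Pmin] := HP v.
set p := P v; set J := ip (v - p) (c - p); set K := ip (c - p) (c - p).
have K0 : 0 <= K by apply: ip_ge0.
have small_step t : 0 < t <= 1 -> 2 * J <= t * K.
  move=> /andP[t0 t1].
  have Ct : C (t *: c + (1 - t) *: p) by apply: Ccvx => //; rewrite ltW.
  have := Pmin _ Ct; rewrite /ipnorm ler_sqrt ?ip_ge0 //.
  have -> : v - (t *: c + (1 - t) *: p) = (v - p) - t *: (c - p).
    by rewrite scalerBl scale1r scalerBr !opprD !opprK addrA addrAC
      -!addrA [t *: p + _]addrC.
  rewrite ip_sqrBZ -/J -/K => le_vp.
  by rewrite -(ler_pM2l t0); lra.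
rewrite leNgt; apply/negP => J0.
have JK0 : 0 < J + K by rewrite ltr_wpDr.
have t0 : 0 < J / (J + K) by rewrite divr_gt0.
have t1 : J / (J + K) <= 1 by rewrite ler_pdivrMr // mul1r lerDl.
have := small_step _ (introT andP (conj t0 t1)).
rewrite mulrAC ler_pdivlMr //.
have : 0 < J * J by rewrite mulr_gt0.
have : 0 <= J * K by rewrite mulr_ge0 // ltW.
nra.
Qed.

Lemma lipschitz_op_sqr {F : V -> V} {L : R} u v : lipschitz_op ip F L ->
  ip (F u - F v) (F u - F v) <= L ^+ 2 * ip (u - v) (u - v).
Proof.
move=> FL; have le_uv := FL u v.
have n0 : 0 <= ipnorm ip (F u - F v) by apply: sqrtr_ge0.
rewrite -!ipnorm_sqr -exprMn ler_pXn2r ?nnegrE //.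
exact: le_trans le_uv.
Qed.

Lemma young_sqrt2 L u w d1 d2 : 0 < L ->
  ip u u <= L ^+ 2 * ip (d1 + d2) (d1 + d2) ->
  2 * ip u w <=
    L * ((1 + Num.sqrt 2) * ip d1 d1 + ip d2 d2 + Num.sqrt 2 * ip w w).
Proof.
move=> L0 le_u; set r := Num.sqrt 2.
have r0 : 0 < r by rewrite sqrtr_gt0.
have r2 : r ^+ 2 = 2 by rewrite sqr_sqrtr.
have le_d12 : 2 * ip d1 d2 <= (r + 1) * ip d1 d1 + (r - 1) * ip d2 d2.
  have r1 : 0 < r + 1 by lra.
  have := ip_young (r - 1) d1 d2; rewrite -(ler_pM2l r1).
  have -> : (r + 1) * (2 * (r - 1) * ip d1 d2) = (r ^+ 2 - 1) * 2 * ip d1 d2.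
    by ring.
  have -> : (r + 1) * (ip d1 d1 + (r - 1) ^+ 2 * ip d2 d2) =
    (r + 1) * ip d1 d1 + (r ^+ 2 - 1) * (r - 1) * ip d2 d2 by ring.
  by rewrite r2; lra.
have le_sum : ip (d1 + d2) (d1 + d2) <= (r + 2) * ip d1 d1 + r * ip d2 d2.
  by rewrite !ipE (ipC d2 d1); lra.
have le_uu : ip u u <= L ^+ 2 * ((r + 2) * ip d1 d1 + r * ip d2 d2).
  by apply: (le_trans le_u); rewrite ler_wpM2l ?sqr_ge0.
have := ip_young (r * L) u w; rewrite exprMn r2 => le_uw.
rewrite -(@ler_pM2l _ (r * L)) ?mulr_gt0 //.
have -> : r * L * (L * ((1 + r) * ip d1 d1 + ip d2 d2 + r * ip w w)) =
  L ^+ 2 * ((r + r ^+ 2) * ip d1 d1 + r * ip d2 d2 + r ^+ 2 * ip w w) by ring.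
rewrite r2; lra.
Qed.

Lemma reflected_projection_ineq {a b c z g1 g0 gz : V} :
  ip (b - g1 - a) (z - a) <= 0 ->
  ip (c - g0 - b) (a - b) <= 0 ->
  ip (c - g0 - b) (c - b) <= 0 ->
  0 <= ip (g1 - gz) (2 *: b - c - z) ->
  ip (a - z) (a - z) <= ip (b - z) (b - z) - ip (b - c) (b - c)
    - ip (a - (2 *: b - c)) (a - (2 *: b - c))
    - 2 * ip gz (2 *: b - c - z) + 2 * ip (g1 - g0) (2 *: b - c - a).
Proof.
(* Left minus right side is exactly twice the sum of the first three
   hypotheses minus the fourth. *)
by rewrite !ipE; ip_symmetries; lra.
Qed.

End InnerProduct.

Theorem lemma3p2 (R : realType) (V : lmodType R) (ip : V -> V -> R)
  (HV : is_hilbert ip)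
  (C : set V) (HC0 : C !=set0) (HCcl : closed_set ip C) (HCcv : convex_set C)
  (P : V -> V) (HP : is_metric_proj ip C P)
  (F : V -> V) (L : R) (HL : 0 < L) (Hmon : monotone_op ip F)
  (Hlip : lipschitz_op ip F L)
  (HS : VI_sol ip C F !=set0)
  (x y : nat -> V) (lambda : R)
  (Hx0 : x 0%N = y 0%N)
  (Hlam : 0 < lambda < (Num.sqrt 2 - 1) / L)
  (Hxrec : forall n, x n.+1 = P (x n - lambda *: F (y n)))
  (Hyrec : forall n, y n.+1 = 2 *: x n.+1 - x n)
  (z : V) (Hz : VI_sol ip C F z)
  (n : nat) (Hn : (2 <= n)%N) :
  ipnorm ip (x n.+1 - z) ^+ 2 <=
    ipnorm ip (x n - z) ^+ 2
    - (1 - lambda * L * (1 + Num.sqrt 2)) * ipnorm ip (x n - x n.-1) ^+ 2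
    + lambda * L * ipnorm ip (x n - y n.-1) ^+ 2
    - (1 - Num.sqrt 2 * lambda * L) * ipnorm ip (x n.+1 - y n) ^+ 2
    - 2 * lambda * ip (F z) (y n - z).
Proof.
case: HV => ip_inner _; have [lambda0 _] := andP Hlam; have [Cz _] := Hz.
case: n Hn => [|[|m]] // _ /=.
have Cx k : C (x k.+1) by rewrite Hxrec; case: (HP (x k - lambda *: F (y k))).
have proj := metric_proj_ip_le0 ip_inner HCcv HP.
have pz := proj (x m.+2 - lambda *: F (y m.+2)) _ Cz.
have pa := proj (x m.+1 - lambda *: F (y m.+1)) _ (Cx m.+2).
have pc := proj (x m.+1 - lambda *: F (y m.+1)) _ (Cx m).
rewrite -!Hxrec in pz pa pc.
have mon : 0 <= ip (lambda *: F (y m.+2) - lambda *: F z) (y m.+2 - z).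
  by rewrite -scalerBr ipZl // mulr_ge0 ?Hmon // ltW.
rewrite {2}Hyrec in mon.
have := reflected_projection_ineq ip_inner pz pa pc mon.
rewrite -scalerBr !ipZl //.
have y_step : y m.+2 - y m.+1 = (x m.+2 - x m.+1) + (x m.+2 - y m.+1).
  by rewrite Hyrec scaler_nat mulr2n [RHS]addrACA addrA.
have := lipschitz_op_sqr ip_inner (y m.+2) (y m.+1) Hlip; rewrite y_step.
move=> /(young_sqrt2 ip_inner L _ (2 *: x m.+2 - x m.+1 - x m.+3) _ _ HL).
rewrite -(ler_pM2l lambda0) (ip_subC ip_inner _ (x m.+3))
  !(ipnorm_sqr ip_inner) Hyrec.
lra.
Qed.
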